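(* In the Poisson-driven SDE setting, let $\psi:\mathcal K\times\mathcal N^\#_{\mathbb R\times\mathcal K}\to[0,\infty]$ be any measurable functional and $N_{\le0}$ any initial condition. If $N,N':\Omega\to\mathcal N^{\#g}_{\mathbb R\times\mathcal K}$ are two non-explosive marked point processes that both solve the Poisson-driven SDE with intensity functional $\psi$ and initial condition $N_{\le0}$, then $N=N'$ almost surely.
   Context: $\mathcal N^\#_{\mathcal Y}$ denotes the boundedly finite $\{0,1,\dots\}\cup\{\infty\}$-valued Borel measures on a complete separable metric space (CSMS) $\mathcal Y$ (Borel $\sigma$-algebra generated by $\xi\mapsto\xi(A)$); for a CSMS $\mathcal K$ with Borel measure $\ell$, $\mathcal N^{\#g}_{\mathbb R\times\mathcal K}$ is the set of $\xi\in\mathcal N^\#_{\mathbb R\times\mathcal K}$ whose ground measure $\xi(\cdot\times\mathcal K)$ is boundedly finite with mass $0$ or $1$ at each time. Non-explosive marked point processes are measurable maps into $\mathcal N^{\#g}_{\mathbb R\times\mathcal K}$. $\theta_t\xi(A)=\xi(A+t)$, $A+t=\{(s+t,u):(s,u)\in A\}$; $\xi|_I$ is the restriction to $I\times\mathcal K$; $\theta_t\xi^-=(\theta_t\xi)|_{(-\infty,0)}$. SDE setting: $N_{\le0}$ is a non-explosive marked point process on $(\Omega_{\le0},\mathcal F_{\le0},\mathbb P_{\le0})$ with no points in $(0,\infty)\times\mathcal K$; $M_{>0}$ is a Poisson process on $\mathbb R\times\mathcal K\times\mathbb R$ with mean measure $dt\,\ell(dm)\,dz$ on $(\Omega_{>0},\mathcal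 F_{>0},\mathbb P_{>0})$; $(\Omega,\mathcal F,\mathbb P)$ is the completion of the product probability space; $M(\omega):=M_{>0}(\omega_{>0})$ for $\omega=(\omega_{\le0},\omega_{>0})$; $\mathcal F_t$ is the $\mathbb P$-completion of $\mathcal F^{N_{\le0}}_t\otimes\mathcal F^{M_{>0}}_t$, where $\mathcal F^{P}_t$ denotes the internal history $\sigma\{P(A\times U):A\subset(-\infty,t]\}$. A solution of the Poisson-driven SDE is an $\mathbb F$-adapted non-explosive marked point process $N$ such that, almost surely, $N(A)=\iint_A\int_{(0,\lambda(\omega,t,m)]}M(\omega,dt,dm,dz)$ for all Borel $A\subset(0,\infty)\times\mathcal K$, with $\lambda(\omega,t,m)=\psi(m\mid\theta_tN(\omega)^-)$, and $N(\omega)|_{(-\infty,0]}=N_{\le0}(\omega_{\le0})$. *)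

From HB Require Import structures.
From mathcomp Require Import all_boot all_order all_algebra.
From mathcomp Require Import all_classical all_reals all_analysis.
From mathcomp Require Import measurable_realfun.

Set Implicit Arguments.
Unset Strict Implicit.
Unset Printing Implicit Defensive.

Import Order.TTheory GRing.Theory Num.Theory.
Import numFieldNormedType.Exports.
Local Open Scope classical_set_scope.
Local Open Scope ring_scope.

Definition Borel {T : topologicalType} : set (set T) := <<s [set: T], @open T >>.

Definition bdd {R : numDomainType} {Y : pseudoMetricType R} (A : set Y) : Prop :=
  exists (y : Y) (r : R), A `<=` ball y r.

(** A measure [xi : set Y -> \bar R] is an element of N^#_Y: a Borel measure
    (only its values on Borel sets matter), with values in {0,1,...} ∪ {oo},
    finite on bounded Borel sets. *)
Definition Nsharp {R : realType} {Y : pseudoMetricType R}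
    (xi : set Y -> \bar R) : Prop :=
  [/\ xi set0 = 0%E,
      (forall A, Borel A -> (exists n : nat, xi A = (n%:R)%:E) \/ xi A = +oo%E),
      (forall F : nat -> set Y, (forall n, Borel (F n)) -> trivIset setT F ->
          (fun n => (\sum_(0 <= i < n) xi (F i))%E) @ \oo --> xi (\bigcup_n F n))
    & (forall A, Borel A -> bdd A -> (xi A < +oo)%E)].

Definition Nsharpg {R : realType} {X : pseudoMetricType R}
    (xi : set (R * X) -> \bar R) : Prop :=
  [/\ Nsharp xi,
      (forall B : set R, Borel B -> bdd B -> (xi (B `*` [set: X]) < +oo)%E)
    & (forall t : R, (xi ([set t] `*` [set: X]) <= 1)%E)].

Definition meq {T : topologicalType} {R : realType} (xi eta : set T -> \bar R) :=
  forall A, Borel A -> xi A = eta A.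

Definition theta {R : realType} {X : Type} (t : R) (xi : set (R * X) -> \bar R) :
    set (R * X) -> \bar R :=
  fun A => xi [set x | A (x.1 - t, x.2)].

Definition restr {R : realType} {X : Type} (I : set R) (xi : set (R * X) -> \bar R) :
    set (R * X) -> \bar R :=
  fun A => xi (A `&` (I `*` [set: X])).

Definition theta_minus {R : realType} {X : Type} (t : R) (xi : set (R * X) -> \bar R) :=
  restr [set s : R | s < 0] (theta t xi).

Definition Ngen {R : realType} {Y : pseudoMetricType R} : set (set (set Y -> \bar R)) :=
  [set S | exists (A : set Y) (C : set (\bar R)),
     [/\ Borel A, measurable C & S = (fun xi => xi A) @^-1` C]].

(** psi : K x N^#_{R x K} -> [0, oo] is measurable, where K x N^# carries the
    product of the Borel sigma-algebra of K and the sigma-algebra of N^#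
    (generated by the evaluation maps), N^# viewed as a subspace. *)
Definition psi_measurable {R : realType} {K : pseudoMetricType R}
    (psi : K -> (set (R * K) -> \bar R) -> \bar R) : Prop :=
  forall C : set (\bar R), measurable C ->
    exists G : set (K * (set (R * K) -> \bar R)),
      <<s [set: K * (set (R * K) -> \bar R)],
          [set B `*` S | B in Borel & S in Ngen] >> G /\
      [set p | C (psi p.1 p.2)] `&` ([set: K] `*` [set xi | Nsharp xi])
      = G `&` ([set: K] `*` [set xi | Nsharp xi]).

(** Poisson probabilities, with the convention that a Poisson variable with
    infinite mean is a.s. infinite (so never equal to a finite k). *)
Definition ppmf {R : realType} (m : \bar R) (k : nat) : R :=
  match m with
  | r%:E => r ^+ k / k`!%:R * expR (- r)
  | _ => 0
  end.

Definition mean_measure {R : realType} {K : completePseudoMetricType R}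
    (ell : {measure set (g_sigma_algebraType (@open K)) -> \bar R}) :
    set (R * (K * R)) -> \bar R :=
  ((@lebesgue_measure R) \x (ell \x (@lebesgue_measure R)))%E.

Definition poisson_process {R : realType} {X : pseudoMetricType R}
    {d : measure_display} {Om : measurableType d} (P : probability Om R)
    (mu : set (R * X) -> \bar R) (M : Om -> set (R * X) -> \bar R) : Prop :=
  [/\ (forall w, Nsharp (M w)),
      (forall B, Borel B -> measurable_fun [set: Om] (fun w => M w B))
    & (forall (n : nat) (B : 'I_n -> set (R * X)) (k : 'I_n -> nat),
         (forall i, Borel (B i)) ->
         (forall i j, i != j -> B i `&` B j = set0) ->
         P [set w | forall i, M w (B i) = ((k i)%:R)%:E] =
           (\prod_(i < n) ppmf (mu (B i)) (k i))%:E)].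

Definition initial_condition {R : realType} {K : pseudoMetricType R}
    {d : measure_display} {Om : measurableType d}
    (N0 : Om -> set (R * K) -> \bar R) : Prop :=
  [/\ (forall w, Nsharpg (N0 w)),
      (forall A, Borel A -> measurable_fun [set: Om] (fun w => N0 w A))
    & (forall w, N0 w ([set s : R | 0 < s] `*` [set: K]) = 0%E)].

Definition hist {R : realType} {X : topologicalType}
    {d : measure_display} {Om : measurableType d}
    (Q : Om -> set (R * X) -> \bar R) (t : R) : set (set Om) :=
  <<s [set: Om], [set S | exists (A : set R) (U : set X) (C : set (\bar R)),
        [/\ Borel A, A `<=` [set s | s <= t], Borel U, measurable C
          & S = (fun w => Q w (A `*` U)) @^-1` C]] >>.

Definition completion {d : measure_display} {T : measurableType d} {R : realType}
    (P : set T -> \bar R) (G : set (set T)) : set (set T) :=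
  [set A | exists B, G B /\ P.-negligible ((A `\` B) `|` (B `\` A))].

Definition measurable_wrt {T : Type} {R : realType} (S : set (set T))
    (f : T -> \bar R) : Prop :=
  forall C : set (\bar R), measurable C -> S (f @^-1` C).

Definition sde_solution {R : realType} {K : pseudoMetricType R}
    {d1 d2 : measure_display} {Om1 : measurableType d1} {Om2 : measurableType d2}
    (P1 : probability Om1 R) (P2 : probability Om2 R)
    (psi : K -> (set (R * K) -> \bar R) -> \bar R)
    (N0 : Om1 -> set (R * K) -> \bar R)
    (M : Om2 -> set (R * (K * R)) -> \bar R)
    (N : Om1 * Om2 -> set (R * K) -> \bar R) : Prop :=
  let P := (P1 \x P2)%E in
  let F := completion P measurable in
  let Ft t := completion P
      <<s [set: Om1 * Om2], [set S1 `*` S2 | S1 in hist N0 t & S2 in hist M t] >> in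
  let lambda w t m := psi m (theta_minus t (N w)) in
  [/\
      (forall w, Nsharpg (N w)),
      (forall A, Borel A -> measurable_wrt F (fun w => N w A)),
      (forall (t : R) (A : set (R * K)), Borel A ->
         A `<=` [set s | s <= t] `*` [set: K] -> measurable_wrt (Ft t) (fun w => N w A))
    & {ae P, forall w,
        (forall A, Borel A -> A `<=` [set s : R | 0 < s] `*` [set: K] ->
           N w A = M w.2 [set x | A (x.1, x.2.1) /\ 0 < x.2.2 /\
                                  ((x.2.2)%:E <= lambda w x.1 x.2.1)%E]) /\
        meq (restr [set s : R | s <= 0] (N w)) (restr [set s : R | s <= 0] (N0 w.1))}].

From HB Require Import structures.
From mathcomp Require Import all_boot all_order all_algebra.
From mathcomp Require Import all_classical all_reals all_analysis.
From mathcomp Require Import measurable_realfun lra.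
Import Order.TTheory GRing.Theory Num.Theory.
Import numFieldNormedType.Exports.
Local Open Scope classical_set_scope.
Local Open Scope ring_scope.
Set Implicit Arguments.
Unset Strict Implicit.

(* Uniqueness is pathwise: on the almost sure event where both solutions satisfy
   the SDE, they coincide.  Say that they agree until t if they coincide on
   (-oo, t] x K.  They agree until 0 by the initial condition.  If they agree
   until every s < t, their intensities coincide up to time t (the intensity
   at time u only sees the strict past), so both are the same thinning of the
   Poisson process on (0, t] x K and they agree until t.  Since the ground
   measures are boundedly finite, neither solution charges (t, t + e] x K for
   e small, so agreement until t propagates to t + e.  A supremum argument
   then gives agreement until every t. *)

Section Borel.
Context {T : topologicalType}.

Lemma Borel_sigma_algebra : sigma_algebra setT (@Borel T).
Proof. exact: smallest_sigma_algebra. Qed.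

Lemma Borel0 : Borel (@set0 T).
Proof. by case: Borel_sigma_algebra. Qed.

Lemma BorelC (A : set T) : Borel A -> Borel (~` A).
Proof. by case: Borel_sigma_algebra => _ h _ /h; rewrite setTD. Qed.

Lemma Borel_bigcup (F : (set T)^nat) : (forall n, Borel (F n)) -> Borel (\bigcup_n F n).
Proof. by case: Borel_sigma_algebra => _ _; apply. Qed.

Lemma BorelU (A B : set T) : Borel A -> Borel B -> Borel (A `|` B).
Proof.
move=> hA hB; rewrite -bigcup2E; apply: Borel_bigcup.
by case=> [|[|n]] //=; exact: Borel0.
Qed.

Lemma BorelI (A B : set T) : Borel A -> Borel B -> Borel (A `&` B).
Proof.
move=> /BorelC hA /BorelC hB; rewrite -[_ `&` _]setCK setCI.
by apply: BorelC; exact: BorelU.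
Qed.

Lemma BorelD (A B : set T) : Borel A -> Borel B -> Borel (A `\` B).
Proof. by move=> hA /BorelC; exact: BorelI. Qed.

Lemma Borel_bigsetU (F : (set T)^nat) n : (forall i, Borel (F i)) ->
  Borel (\big[setU/set0]_(i < n) F i).
Proof.
move=> hF; elim: n => [|n ih]; first by rewrite big_ord0; exact: Borel0.
by rewrite big_ord_recr /=; exact: BorelU.
Qed.

Lemma Borel_open (A : set T) : open A -> Borel A.
Proof. by move=> oA X [_]; apply. Qed.

Lemma Borel_closed (A : set T) : closed A -> Borel A.
Proof. by rewrite -openC => /Borel_open/BorelC; rewrite setCK. Qed.

End Borel.

Lemma Borel_preimage {T U : topologicalType} (f : T -> U) : continuous f ->
  forall A, Borel A -> Borel (f @^-1` A).
Proof.
move=> cf; apply: smallest_sub.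
  split; first by rewrite preimage_set0; exact: Borel0.
    by move=> A hA; rewrite setTD preimage_setC; exact: BorelC.
  by move=> F hF; rewrite preimage_bigcup; exact: Borel_bigcup.
by move=> A oA; apply: Borel_open; apply: open_comp => // x _; exact: cf.
Qed.

Lemma real_induction {R : realType} (P : R -> Prop) (a : R) : P a ->
  (forall s t, s <= t -> P t -> P s) ->
  (forall t, (forall s, s < t -> P s) -> P t) ->
  (forall t, P t -> exists2 e, 0 < e & P (t + e)) ->
  forall t, P t.
Proof.
move=> Pa Pdown Pstep Pext t; apply: contrapT => nPt.
have ubt : ubound P t.
  by move=> s Ps; rewrite leNgt; apply/negP => /ltW ts; exact/nPt/(Pdown _ _ ts).
have supP : has_sup P by split; [exists a | exists t].
have Pbefore s : s < sup P -> P s.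
  rewrite -subr_gt0 => lt_s; have [u Pu su] := sup_adherent lt_s supP.
  by apply: Pdown Pu; apply: ltW; rewrite opprB addrCA subrr addr0 in su.
have [e e0 Pe] := Pext _ (Pstep _ Pbefore).
by have := sup_upper_bound supP Pe; rewrite gerDl leNgt e0.
Qed.

Lemma nat_valued_cvg_eventually {R : realType} (u : nat -> \bar R) (k : nat) :
  (forall n, (exists j : nat, u n = (j%:R)%:E) \/ u n = +oo%E) ->
  u @ \oo --> (k%:R)%:E -> \forall n \near \oo, u n = (k%:R)%:E.
Proof.
move=> u_nat /fine_cvgP[u_fin /cvgr_dist_lt/(_ _ ltr01) u_close].
apply: filterS2 u_fin u_close => n /=; have [[j ->]|->] //= := u_nat n.
move=> _ jk; congr (_%:E); apply/eqP; rewrite eqr_nat.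
wlog jk_le : j k jk / (j <= k)%N.
  move=> wlog_jk; have [/wlog_jk|/ltnW/wlog_jk] := leqP j k; first exact.
  by rewrite distrC eq_sym; apply.
by move: jk; rewrite -natrB // normr_nat ltrn1 ltnS leqn0 subn_eq0 eqn_leq jk_le => ->.
Qed.

Section Nsharp.
Context {R : realType} {Y : pseudoMetricType R}.
Implicit Types (xi : set Y -> \bar R) (A B : set Y) (F : (set Y)^nat).

Lemma Nsharp_nat_or_oo xi A : Nsharp xi -> Borel A ->
  (exists n : nat, xi A = (n%:R)%:E) \/ xi A = +oo%E.
Proof. by case=> _ h _ _; apply: h. Qed.

Lemma Nsharp_ge0 xi A : Nsharp xi -> Borel A -> (0 <= xi A)%E.
Proof.
by move=> xiN /(Nsharp_nat_or_oo xiN) [[n ->]|->]; rewrite ?lee_fin ?leey.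
Qed.

Lemma NsharpU xi A B : Nsharp xi -> Borel A -> Borel B -> A `&` B = set0 ->
  xi (A `|` B) = (xi A + xi B)%E.
Proof.
move=> [xi0 _ xi_sigma _] bA bB AB0.
have b2 n : Borel (bigcup2 A B n) by case: n => [|[|n]] //=; exact: Borel0.
have := xi_sigma _ b2; rewrite -trivIset_bigcup2 bigcup2E => /(_ AB0) cvg2.
apply: (cvg_unique (@ereal_hausdorff R) cvg2); apply: cvg_near_cst.
exists 2%N => // -[|[|n]] // _ /=; elim: n => [|n ih].
  by rewrite !big_nat_recr //= big_geq // add0e.
by rewrite big_nat_recr //= ih xi0 adde0.
Qed.

Lemma le_Nsharp xi A B : Nsharp xi -> Borel A -> Borel B -> A `<=` B ->
  (xi A <= xi B)%E.
Proof.
move=> xiN bA bB AB; rewrite -(setDUK AB) NsharpU ?leeDl ?Nsharp_ge0 //;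
  try exact: BorelD.
by rewrite setDE setICA setICr setI0.
Qed.

Lemma Nsharp_bigsetU xi F : Nsharp xi -> (forall n, Borel (F n)) ->
  trivIset setT F -> forall n,
  (\sum_(0 <= i < n) xi (F i))%E = xi (\big[setU/set0]_(i < n) F i).
Proof.
move=> xiN bF tF; elim=> [|n ih]; first by rewrite big_geq // big_ord0; case: xiN.
rewrite big_nat_recr //= ih big_ord_recr /= NsharpU //; first exact: Borel_bigsetU.
rewrite -bigcup_mkord; apply/seteqP; split => // x [[i /= lt_in Fix] Fnx].
by move: lt_in; rewrite (tF i n I I (ex_intro _ x (conj Fix Fnx))) ltnn.
Qed.

Lemma Nsharp_nondecreasing_cvg xi F : Nsharp xi -> (forall n, Borel (F n)) ->
  nondecreasing_seq F -> (fun n => xi (F n)) @ \oo --> xi (\bigcup_n F n).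
Proof.
move=> xiN bF ndF.
have bD n : Borel (seqD F n) by case: n => [|n] /=; [exact: bF | exact: BorelD].
have := (let: And4 _ _ xi_sigma _ := xiN in xi_sigma) _ bD (trivIset_seqD ndF).
rewrite eq_bigcup_seqD -cvg_shiftS /=.
suff -> : (fun n => xi (F n)) = (fun n => \sum_(0 <= i < n.+1) xi (seqD F i))%E by [].
apply: funext => n; rewrite Nsharp_bigsetU ?nondecreasing_bigsetU_seqD //.
exact: trivIset_seqD.
Qed.

Lemma eq_Nsharp_nondecreasing_bigcup xi xi' F : Nsharp xi -> Nsharp xi' ->
  (forall n, Borel (F n)) -> nondecreasing_seq F ->
  (forall n, xi (F n) = xi' (F n)) -> xi (\bigcup_n F n) = xi' (\bigcup_n F n).
Proof.
move=> xiN xi'N bF ndF xixi'.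
have := Nsharp_nondecreasing_cvg xiN bF ndF; rewrite (funext xixi') => cvg_xi.
apply: (cvg_unique (@ereal_hausdorff R) cvg_xi); exact: Nsharp_nondecreasing_cvg.
Qed.

Lemma Nsharp_nondecreasing_eventually xi F : Nsharp xi ->
  (forall n, Borel (F n)) -> nondecreasing_seq F -> (xi (\bigcup_n F n) < +oo)%E ->
  \forall n \near \oo, xi (F n) = xi (\bigcup_n F n).
Proof.
move=> xiN bF ndF xiF_fin.
have [[k xiFk]|xiFoo] := Nsharp_nat_or_oo xiN (Borel_bigcup bF); last first.
  by rewrite xiFoo ltxx in xiF_fin.
rewrite xiFk; apply: nat_valued_cvg_eventually => [n|].
  exact: Nsharp_nat_or_oo.
by rewrite -xiFk; exact: Nsharp_nondecreasing_cvg.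
Qed.

End Nsharp.

Section SpaceTime.
Context {R : realType} {K : pseudoMetricType R}.
Local Notation NM := (set (R * K) -> \bar R).
Implicit Types (xi : NM) (A : set (R * K)).

Lemma meq_sym xi xi' : meq xi xi' -> meq xi' xi.
Proof. by move=> xixi' A bA; rewrite xixi'. Qed.

Lemma Ngen_sigma_meq_closed (G : set (K * NM)) :
  <<s [set: K * NM], [set B `*` S | B in @Borel K & S in Ngen] >> G ->
  forall m xi xi', meq xi xi' -> G (m, xi) -> G (m, xi').
Proof.
move: G; apply: smallest_sub.
  split => //.
    move=> A A_meq m xi xi' xixi' [_ nAxi]; split => // Axi'; apply: nAxi.
    exact: (A_meq m xi' xi (meq_sym xixi')).
  by move=> F F_meq m xi xi' xixi' [n _ Fn]; exists n => //; exact: (F_meq n m xi).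
move=> _ [B bB [_ [A [C [bA mC ->]]] <-]] m xi xi' xixi' [/= Bm Cxi].
by split => //=; rewrite /preimage /= -xixi'.
Qed.

Lemma psi_measurable_meq (psi : K -> NM -> \bar R) : psi_measurable psi ->
  forall m xi xi', Nsharp xi -> Nsharp xi' -> meq xi xi' -> psi m xi = psi m xi'.
Proof.
move=> psiM m xi xi' xiN xi'N xixi'.
have [G [sG psiE]] := psiM [set psi m xi] (emeasurable_set1 _).
have : ([set p | [set psi m xi] (psi p.1 p.2)] `&` ([set: K] `*` Nsharp)) (m, xi)
  by split.
rewrite psiE => -[/(Ngen_sigma_meq_closed sG xixi') Gxi' _].
have : (G `&` ([set: K] `*` Nsharp)) (m, xi') by split.
by rewrite -psiE => -[/= ->].
Qed.

Definition le_time (c : R) : set (R * K) := [set x | x.1 <= c].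
Definition gt_time (c : R) : set (R * K) := [set x | c < x.1].
Definition shift_time (u : R) (x : R * K) : R * K := (x.1 - u, x.2).

Lemma continuous_shift_time u : continuous (shift_time u).
Proof.
move=> [s m]; rewrite /shift_time /=.
have cvg1 : (fun x : R * K => x.1 - u) @ (s, m) --> s - u.
  by apply: cvgB; [exact: cvg_fst | exact: cvg_cst].
exact: (cvg_pair cvg1 (@cvg_snd _ _ _ _ _)).
Qed.

Lemma Borel_time_cylinder (S : set R) : Borel S -> Borel (S `*` [set: K]).
Proof.
have -> : S `*` [set: K] = fst @^-1` S by apply/seteqP; split => x //= [].
by apply: Borel_preimage => x; exact: cvg_fst.
Qed.

Lemma Borel_le_time c : Borel (le_time c).
Proof.
have -> : le_time c = [set s | s <= c] `*` [set: K] by apply/seteqP; split => x //= [].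
by apply: Borel_time_cylinder; apply: Borel_closed; exact: closed_le.
Qed.

Lemma Borel_gt_time c : Borel (gt_time c).
Proof.
have -> : gt_time c = [set s | c < s] `*` [set: K] by apply/seteqP; split => x //= [].
by apply: Borel_time_cylinder; apply: Borel_open; exact: open_gt.
Qed.

Lemma Nsharp_split_time xi A c : Nsharp xi -> Borel A ->
  xi A = (xi (A `&` le_time c) + xi (A `&` gt_time c))%E.
Proof.
move=> xiN bA; rewrite -NsharpU //.
- rewrite -setIUr (_ : _ `|` _ = setT) ?setIT //.
  by apply/seteqP; split => // x _; case: (leP x.1 c); [left | right].
- by apply: BorelI => //; exact: Borel_le_time.
- by apply: BorelI => //; exact: Borel_gt_time.
apply/seteqP; split => // x [[_ le_xc] [_ lt_cx]].
by move: (le_lt_trans le_xc lt_cx); rewrite ltxx.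
Qed.

Definition neg_half : set (R * K) := [set s : R | s < 0] `*` [set: K].

Lemma theta_minusE u xi A :
  theta_minus u xi A = xi (shift_time u @^-1` (A `&` neg_half)).
Proof. by []. Qed.

Lemma Borel_shift_neg_half u A : Borel A ->
  Borel (shift_time u @^-1` (A `&` neg_half)).
Proof.
move=> bA; apply: Borel_preimage; first exact: continuous_shift_time.
apply: BorelI => //; apply: Borel_time_cylinder; apply: Borel_open; exact: open_lt.
Qed.

Lemma Nsharp_theta_minus u xi : Nsharp xi -> Nsharp (theta_minus u xi).
Proof.
case=> xi0 xi_nat xi_sigma xi_bdd; split.
- by rewrite theta_minusE set0I preimage_set0.
- by move=> A bA; rewrite theta_minusE; apply: xi_nat; exact: Borel_shift_neg_half.
- move=> F bF tF; rewrite theta_minusE setI_bigcupl preimage_bigcup.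
  apply: xi_sigma => [n|i j _ _ [x [[Fi _] [Fj _]]]].
    exact: Borel_shift_neg_half.
  by apply: tF => //; exists (shift_time u x).
- move=> A bA [y [r Ayr]]; rewrite theta_minusE; apply: xi_bdd.
    exact: Borel_shift_neg_half.
  exists (y.1 + u, y.2), r => x [/Ayr [yx1 yx2] _]; split => //=.
  by move: yx1; rewrite -ball_normE /ball_ /= opprB addrA.
Qed.

Lemma eq_Nsharp_exhaust xi xi' A (c : nat -> R) : Nsharp xi -> Nsharp xi' ->
  Borel A -> {homo c : m n / (m <= n)%N >-> m <= n} ->
  A `<=` \bigcup_n le_time (c n) ->
  (forall n, xi (A `&` le_time (c n)) = xi' (A `&` le_time (c n))) -> xi A = xi' A.
Proof.
move=> xiN xi'N bA c_homo A_cover xixi'.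
have bF n : Borel (A `&` le_time (c n)) by apply: BorelI => //; exact: Borel_le_time.
have ndF : nondecreasing_seq (fun n => A `&` le_time (c n)).
  move=> m n mn; apply/subsetPset => x [Ax le_x]; split => //.
  exact: le_trans le_x (c_homo _ _ mn).
have <- : \bigcup_n (A `&` le_time (c n)) = A.
  by rewrite -setI_bigcupr; apply/setIidl.
exact: eq_Nsharp_nondecreasing_bigcup.
Qed.

Lemma Nsharpg_no_mass_after xi t : Nsharpg xi ->
  exists2 e, 0 < e & xi (gt_time t `&` le_time (t + e)) = 0%E.
Proof.
move=> [xiN xi_ground _].
pose C := gt_time t `&` le_time (t + 1).
pose F n := gt_time (t + n.+1%:R^-1) `&` le_time (t + 1).
have bF n : Borel (F n) by apply: BorelI; [exact: Borel_gt_time | exact: Borel_le_time].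
have ndF : nondecreasing_seq F.
  move=> m n mn; apply/subsetPset => x [lt_x le_x]; split => //.
  apply: le_lt_trans lt_x; rewrite lerD2l lef_pV2 ?posrE ?ltr0Sn //.
  by rewrite ler_nat.
have FC : \bigcup_n F n = C.
  apply/seteqP; split => [x [n _ [lt_x le_x]]|x [lt_x le_x]].
    split => //; apply: lt_trans lt_x.
    by rewrite ltrDl invr_gt0 ltr0Sn.
  have x1_gt : 0 < x.1 - t by rewrite subr_gt0.
  exists (Num.truncn (x.1 - t)^-1) => //; split => //.
  rewrite /gt_time /= -ltrBrDl -invf_plt ?posrE ?ltr0Sn //.
  exact: truncnS_gt.
have C_fin : (xi C < +oo)%E.
  have -> : C = ([set s | t < s] `&` [set s | s <= t + 1]) `*` [set: K].
    by apply/seteqP; split => x /= [].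
  apply: xi_ground.
    apply: BorelI; first by apply: Borel_open; exact: open_gt.
    by apply: Borel_closed; exact: closed_le.
  exists t, 2 => s [/= lt_ts le_s]; rewrite -ball_normE /ball_ /=.
  by rewrite distrC ger0_norm ?subr_ge0 ?ltW //; lra.
have := Nsharp_nondecreasing_eventually xiN bF ndF; rewrite FC => /(_ C_fin).
move=> [N _ /(_ N (leqnn N)) /= xiFN]; rewrite /F in xiFN.
set e := N.+1%:R^-1 in xiFN.
have e_gt0 : 0 < e by rewrite invr_gt0.
have e_le1 : e <= 1 by rewrite invf_le1 ?ltr0Sn // ler1n.
exists e => //.
have bC : Borel C by rewrite -FC; exact: Borel_bigcup.
have := Nsharp_split_time (t + e) xiN bC.
have -> : C `&` gt_time (t + e) = gt_time (t + e) `&` le_time (t + 1).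
  by apply/seteqP; split => x; rewrite /C /gt_time /le_time /= => *; lra.
have -> : C `&` le_time (t + e) = gt_time t `&` le_time (t + e).
  by apply/seteqP; split => x; rewrite /C /gt_time /le_time /= => *; lra.
have xiC_fin : xi C \is a fin_num by rewrite ge0_fin_numE // Nsharp_ge0.
rewrite xiFN => /esym/(congr1 (fun y => y - xi C)%E).
by rewrite addeK // subee.
Qed.

End SpaceTime.

Section Pathwise.
Context {R : realType} {K : pseudoMetricType R}.
Local Notation NM := (set (R * K) -> \bar R).
Variable psi : K -> NM -> \bar R.
Hypothesis psiM : psi_measurable psi.

Definition thinning (xi : NM) (A : set (R * K)) : set (R * (K * R)) :=
  [set x | A (x.1, x.2.1) /\ 0 < x.2.2 /\
           ((x.2.2)%:E <= psi x.2.1 (theta_minus x.1 xi))%E].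

Variables (xi xi' xi0 : NM) (Mw : set (R * (K * R)) -> \bar R).
Hypotheses (xiG : Nsharpg xi) (xi'G : Nsharpg xi').
Hypothesis xi_thinning : forall A, Borel A ->
  A `<=` [set s : R | 0 < s] `*` [set: K] -> xi A = Mw (thinning xi A).
Hypothesis xi'_thinning : forall A, Borel A ->
  A `<=` [set s : R | 0 < s] `*` [set: K] -> xi' A = Mw (thinning xi' A).
Hypothesis xi_init :
  meq (restr [set s : R | s <= 0] xi) (restr [set s : R | s <= 0] xi0).
Hypothesis xi'_init :
  meq (restr [set s : R | s <= 0] xi') (restr [set s : R | s <= 0] xi0).

Let xiN : Nsharp xi. Proof. by case: xiG. Qed.
Let xi'N : Nsharp xi'. Proof. by case: xi'G. Qed.

Definition agree_until (t : R) :=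
  forall A, Borel A -> A `<=` le_time t -> xi A = xi' A.

Lemma agree_until0 : agree_until 0.
Proof.
move=> A bA A_le0.
have A_restr : A `&` ([set s : R | s <= 0] `*` [set: K]) = A.
  by apply/setIidl => x /A_le0.
by move: (xi_init bA) (xi'_init bA); rewrite /restr A_restr => -> ->.
Qed.

Lemma agree_until_le s t : s <= t -> agree_until t -> agree_until s.
Proof.
move=> st agree_t A bA A_le; apply: agree_t => // x /A_le.
by rewrite /le_time /= => /le_trans; apply.
Qed.

Lemma agree_before t : (forall s, s < t -> agree_until s) ->
  forall A, Borel A -> A `<=` [set x | x.1 < t] -> xi A = xi' A.
Proof.
move=> agree_lt A bA A_lt.
apply: (eq_Nsharp_exhaust (c := fun n => t - n.+1%:R^-1)) => //.
- move=> m n mn; rewrite lerD2l lerN2 lef_pV2 ?posrE ?ltr0Sn //.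
  by rewrite ler_nat.
- move=> x /A_lt x_lt; have x_gap : 0 < t - x.1 by rewrite subr_gt0.
  exists (Num.truncn (t - x.1)^-1) => //; rewrite /le_time /=.
  rewrite lerBrDr addrC -lerBrDr ltW // -invf_plt ?posrE ?ltr0Sn //.
  exact: truncnS_gt.
move=> n; apply: (agree_lt (t - n.+1%:R^-1)); last by move=> x [].
  by rewrite ltrBlDr ltrDl invr_gt0 ltr0Sn.
by apply: BorelI => //; exact: Borel_le_time.
Qed.

(* The intensity at time u only sees the points strictly before u. *)
Lemma psi_agree t : (forall s, s < t -> agree_until s) -> forall u m, u <= t ->
  psi m (theta_minus u xi) = psi m (theta_minus u xi').
Proof.
move=> agree_lt u m ut; apply: (psi_measurable_meq psiM); try exact: Nsharp_theta_minus.
move=> B bB; rewrite !theta_minusE; apply: (agree_before agree_lt).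
  exact: Borel_shift_neg_half.
move=> x [_ [/= x_neg _]]; apply: lt_le_trans ut.
by rewrite -subr_lt0.
Qed.

Lemma agree_until_left t : (forall s, s < t -> agree_until s) -> agree_until t.
Proof.
move=> agree_lt A bA A_le.
have bA0 : Borel (A `&` le_time 0) by apply: BorelI => //; exact: Borel_le_time.
have bA0' : Borel (A `&` gt_time 0) by apply: BorelI => //; exact: Borel_gt_time.
rewrite (Nsharp_split_time 0 xiN bA) (Nsharp_split_time 0 xi'N bA).
congr (_ + _)%E; first by apply: agree_until0 => // x [].
have A_pos : A `&` gt_time 0 `<=` [set s : R | 0 < s] `*` [set: K] by move=> x [].
rewrite (xi_thinning bA0' A_pos) (xi'_thinning bA0' A_pos); congr (Mw _).
apply/seteqP; split => x [Ax [z_gt0 z_le]]; do 2!split => //.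
  by rewrite -(psi_agree agree_lt) //; case: Ax => /A_le.
by rewrite (psi_agree agree_lt) //; case: Ax => /A_le.
Qed.

Lemma agree_until_right t : agree_until t -> exists2 e, 0 < e & agree_until (t + e).
Proof.
move=> agree_t.
have [e e_gt0 xi_e] := Nsharpg_no_mass_after t xiG.
have [e' e'_gt0 xi'_e'] := Nsharpg_no_mass_after t xi'G.
exists (Num.min e e'); first by rewrite lt_min e_gt0.
move=> A bA A_le.
have no_mass (eta : NM) c : Nsharp eta -> Num.min e e' <= c ->
    eta (gt_time t `&` le_time (t + c)) = 0%E -> eta (A `&` gt_time t) = 0%E.
  move=> etaN le_c eta0.
  have bAt : Borel (A `&` gt_time t) by apply: BorelI => //; exact: Borel_gt_time.
  apply/eqP; rewrite eq_le Nsharp_ge0 // andbT -eta0; apply: le_Nsharp => //.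
    by apply: BorelI; [exact: Borel_gt_time | exact: Borel_le_time].
  move=> x [/A_le x_le x_gt]; split => //; apply: le_trans x_le _.
  by rewrite lerD2l.
rewrite (Nsharp_split_time t xiN bA) (Nsharp_split_time t xi'N bA).
rewrite (no_mass xi e xiN _ xi_e) ?(no_mass xi' e' xi'N _ xi'_e') ?ge_min ?lexx ?orbT //.
congr (_ + _)%E; apply: agree_t; last by move=> x [].
by apply: BorelI => //; exact: Borel_le_time.
Qed.

Lemma pathwise_uniqueness : meq xi xi'.
Proof.
have agree_all := real_induction agree_until0 agree_until_le agree_until_left
  agree_until_right.
move=> A bA; apply: (eq_Nsharp_exhaust (c := fun n => n%:R)) => //.
- by move=> m n; rewrite ler_nat.
- move=> x _; exists (Num.truncn x.1).+1 => //.
  exact/ltW/truncnS_gt.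
move=> n; apply: (agree_all n%:R) => [|x []//].
by apply: BorelI => //; exact: Borel_le_time.
Qed.

End Pathwise.

Theorem theorem2p20
  (R : realType)
  (K : completePseudoMetricType R)
  (K_hausdorff : hausdorff_space K)
  (K_separable : exists D : set K, countable D /\ closure D = [set: K])
  (ell : {measure set (g_sigma_algebraType (@open K)) -> \bar R})
  (psi : K -> (set (R * K) -> \bar R) -> \bar R)
  (psi_meas : psi_measurable psi)
  (psi_ge0 : forall m xi, Nsharp xi -> (0 <= psi m xi)%E)
  (d1 d2 : measure_display)
  (Om1 : measurableType d1) (Om2 : measurableType d2)
  (P1 : probability Om1 R) (P2 : probability Om2 R)
  (N0 : Om1 -> set (R * K) -> \bar R)
  (hN0 : initial_condition N0)
  (M : Om2 -> set (R * (K * R)) -> \bar R)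
  (hM : poisson_process P2 (mean_measure ell) M)
  (N N' : Om1 * Om2 -> set (R * K) -> \bar R)
  (hN : sde_solution P1 P2 psi N0 M N)
  (hN' : sde_solution P1 P2 psi N0 M N') :
  {ae (P1 \x P2)%E, forall w, meq (N w) (N' w)}.
Proof.
case: hN => NG _ _ N_sde; case: hN' => N'G _ _ N'_sde.
apply: filterS2 N_sde N'_sde => w [N_thin N_init] [N'_thin N'_init].
exact: (pathwise_uniqueness psi_meas (NG w) (N'G w) N_thin N'_thin N_init N'_init).
Qed.
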